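(* Let $M$ be a metric structure. If for $j\in\mathbb{N}$ the definable predicates $\phi_j(x)=\phi_j(x_1,\dots,x_m)$ have the strong Erdős–Hajnal property and converge uniformly to $\phi(x)$, then $\phi(x)$ also has the strong Erdős–Hajnal property.
   Context: A $[0,1]$-valued definable predicate $\phi(x_1,\dots,x_m)$ on $M$ has the strong Erdős–Hajnal property if for every $\varepsilon>0$ there is $\delta>0$ such that for all finite $A_i\subseteq M^{x_i}$ ($1\le i\le m$) there are $B_i\subseteq A_i$ with $|B_i|\geq\delta|A_i|$ such that $(B_1,\dots,B_m)$ is $(\phi,\varepsilon)$-homogeneous, i.e. $|\phi(a)-\phi(a')|\leq\varepsilon$ for all $a,a'\in B_1\times\dots\times B_m$. *)

From HB Require Import structures.
From mathcomp Require Import all_boot all_order all_algebra.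
From mathcomp Require Import finmap.
From mathcomp Require Import reals.
Set Implicit Arguments. Unset Strict Implicit. Unset Printing Implicit Defensive.
Import Order.TTheory GRing.Theory Num.Theory.
Local Open Scope ring_scope.
Local Open Scope fset_scope.

(* An element of M^{x_1} x ... x M^{x_m}: the i-th variable block x_i has
   length k i, so a_i is a (k i)-tuple from M. *)
Definition ptuple (M : Type) (m : nat) (k : 'I_m -> nat) :=
  forall i : 'I_m, (k i).-tuple M.

Definition unit_valued (R : realType) (M : Type) (m : nat) (k : 'I_m -> nat)
  (phi : ptuple M k -> R) : Prop :=
  forall a, 0 <= phi a <= 1.

Definition homogeneous (R : realType) (M : choiceType) (m : nat) (k : 'I_m -> nat)
  (phi : ptuple M k -> R) (B : forall i : 'I_m, {fset (k i).-tuple M}) (eps : R) : Prop :=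
  forall a a' : ptuple M k,
    (forall i, a i \in B i) -> (forall i, a' i \in B i) ->
    `|phi a - phi a'| <= eps.

Definition strong_EH (R : realType) (M : choiceType) (m : nat) (k : 'I_m -> nat)
  (phi : ptuple M k -> R) : Prop :=
  forall eps : R, 0 < eps ->
  exists2 delta : R, 0 < delta &
  forall A : forall i : 'I_m, {fset (k i).-tuple M},
  exists B : forall i : 'I_m, {fset (k i).-tuple M},
    (forall i, B i `<=` A i /\ delta * (#|` A i|)%:R <= (#|` B i|)%:R) /\
    homogeneous phi B eps.

Definition uniform_cvg (R : realType) (M : Type) (m : nat) (k : 'I_m -> nat)
  (phis : nat -> ptuple M k -> R) (phi : ptuple M k -> R) : Prop :=
  forall eps : R, 0 < eps ->
  exists N : nat, forall j : nat, (N <= j)%N -> forall a, `|phis j a - phi a| <= eps.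

From HB Require Import structures.
From mathcomp Require Import all_boot all_order all_algebra.
From mathcomp Require Import finmap.
From mathcomp Require Import reals.
From mathcomp Require Import ring.
Import Order.TTheory GRing.Theory Num.Theory.
Local Open Scope ring_scope.

(* If [|psi - phi| <= eps/3] everywhere, every [(psi, eps/3)]-homogeneous
   family is [(phi, eps)]-homogeneous, so the [delta] that [psi] has for
   [eps/3] also works for [phi] and [eps]. *)

Section UniformApproximation.

Variables (R : realType) (M : choiceType) (m : nat) (k : 'I_m -> nat).
Implicit Types (phi psi : ptuple M k -> R) (e eps : R).

Lemma homogeneous_approx phi psi (B : forall i : 'I_m, {fset (k i).-tuple M})
    e eps :
  (forall a, `|psi a - phi a| <= e) ->
  homogeneous psi B eps -> homogeneous phi B (e + eps + e).
Proof.
move=> close hom a a' Ba Ba'.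
have -> : phi a - phi a' = (phi a - psi a) + (psi a - psi a') + (psi a' - phi a').
  by ring.
apply: le_trans (ler_normD _ _) _; rewrite lerD //.
apply: le_trans (ler_normD _ _) _; rewrite lerD ?hom //.
by rewrite distrC.
Qed.

Lemma strong_EH_approx phi :
  (forall e, 0 < e ->
     exists2 psi, strong_EH psi & forall a, `|psi a - phi a| <= e) ->
  strong_EH phi.
Proof.
move=> approx eps eps_gt0.
have e_gt0 : 0 < eps / 3 by rewrite divr_gt0.
have [psi EHpsi close] := approx _ e_gt0.
have [delta delta_gt0 large_hom] := EHpsi _ e_gt0.
exists delta => // A.
have [B [sizeB homB]] := large_hom A.
exists B; split => //.
have -> : eps = eps / 3 + eps / 3 + eps / 3 by field.
exact: homogeneous_approx homB.
Qed.

End UniformApproximation.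

Theorem mainTheorem11 (R : realType) (M : choiceType) (m : nat) (k : 'I_m -> nat)
  (phis : nat -> ptuple M k -> R) (phi : ptuple M k -> R) :
  (forall j, unit_valued (phis j)) ->
  (forall j, strong_EH (phis j)) ->
  uniform_cvg phis phi ->
  strong_EH phi.
Proof.
move=> _ EHphis cvg; apply: strong_EH_approx => e e_gt0.
have [N close] := cvg e e_gt0.
by exists (phis N) => //; apply: close.
Qed.
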